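(* Let $A,G$ be $n\times n$ symmetric matrices with $G\succeq A\succ0$. Then for any $u\in\mathbb{R}^n\setminus\{0\}$, $$V(A,G)-V(A,\mathrm{SR1}(A,G,u))=\ln\left(1+\nu^2(A,G,u)\right).$$
   Context: $V(A,G)=\ln\det(GA^{-1})$. $\nu(A,G,u)=\left(\frac{u^\top(G-A)G^{-1}(G-A)u}{u^\top(A-AG^{-1}A)u}\right)^{1/2}$ for $G\succeq A$, with the convention (used in the paper) that $\nu(A,G,u)=0$ when $(G-A)u=0$. $\mathrm{SR1}(A,G,u)=G$ if $(G-A)u=0$, and otherwise $\mathrm{SR1}(A,G,u)=G-\frac{(G-A)uu^\top(G-A)}{u^\top(G-A)u}$. *)

From HB Require Import structures.
From mathcomp Require Import all_boot all_order all_algebra.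
From mathcomp Require Import all_classical all_reals all_analysis.
Set Implicit Arguments. Unset Strict Implicit. Unset Printing Implicit Defensive.
Import Order.TTheory GRing.Theory Num.Theory.
Local Open Scope ring_scope.

Section Defs.
Variable R : realType.

Definition qform n (M : 'M[R]_n) (u : 'cV[R]_n) : R := (u^T *m M *m u) 0 0.

Definition symmat n (M : 'M[R]_n) : Prop := M^T = M.

Definition posdef n (M : 'M[R]_n) : Prop :=
  symmat M /\ forall u : 'cV[R]_n, u != 0 -> 0 < qform M u.

Definition psd n (M : 'M[R]_n) : Prop :=
  symmat M /\ forall u : 'cV[R]_n, 0 <= qform M u.

Definition Vpot n (A G : 'M[R]_n) : R := ln (\det (G *m invmx A)).

Definition nu n (A G : 'M[R]_n) (u : 'cV[R]_n) : R :=
  if (G - A) *m u == 0 then 0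
  else Num.sqrt (qform ((G - A) *m invmx G *m (G - A)) u /
                 qform (A - A *m invmx G *m A) u).

Definition SR1 n (A G : 'M[R]_n) (u : 'cV[R]_n) : 'M[R]_n :=
  if (G - A) *m u == 0 then G
  else G - (qform (G - A) u)^-1 *: ((G - A) *m u *m u^T *m (G - A)).

End Defs.

From HB Require Import structures.
From mathcomp Require Import all_boot all_order all_algebra.
From mathcomp Require Import all_classical all_reals all_analysis.
From mathcomp Require Import ring lra.
Set Implicit Arguments. Unset Strict Implicit.
Import Order.TTheory GRing.Theory Num.Theory.
Local Open Scope ring_scope.

(* Write D := G - A, w := D u, b := u'Du and a := w'G^-1 w.  The SR1 update is
   G (I - b^-1 G^-1 w w'), a rank-one perturbation of G, so by Sylvester's
   determinant identity det SR1 = det G (b - a) / b and the potential drops by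
   ln (b / (b - a)).  On the other side A - A G^-1 A = D - D G^-1 D, so
   nu^2 = a / (b - a).  Positivity of b - a comes from expanding the
   nonnegative form D at u - G^-1 w. *)

Section Determinants.
Variable R : comNzRingType.

Lemma det_1B_mulmxC m n (X : 'M[R]_(m, n)) (Y : 'M[R]_(n, m)) :
  \det (1%:M - X *m Y) = \det (1%:M - Y *m X).
Proof.
have E1 : block_mx 1%:M 0 Y 1%:M *m block_mx 1%:M X 0 (1%:M - Y *m X)
        = block_mx 1%:M X Y 1%:M :> 'M[R]_(m + n).
  by rewrite mulmx_block !mulmx1 !mul1mx !mulmx0 !mul0mx !addr0 ?add0r addrC subrK.
have E2 : block_mx (1%:M - X *m Y) X 0 1%:M *m block_mx 1%:M 0 Y 1%:M
        = block_mx 1%:M X Y 1%:M :> 'M[R]_(m + n).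
  by rewrite mulmx_block !mulmx1 !mul1mx ?mulmx0 ?mul0mx ?addr0 ?add0r subrK.
have := congr1 determinant (etrans E1 (esym E2)).
by rewrite !det_mulmx !det_ublock !det_lblock !det1 !mul1r !mulr1.
Qed.

Lemma det_1B_rank1 n (x y : 'cV[R]_n) :
  \det (1%:M - x *m y^T) = 1 - (y^T *m x) 0 0.
Proof. by rewrite det_1B_mulmxC det_mx11 !mxE mulr1n. Qed.

Lemma det_addZ_poly n (M N : 'M[R]_n) :
  exists p : {poly R}, forall t, p.[t] = \det (M + t *: N).
Proof.
exists (\det (\matrix_(i, j) ((M i j)%:P + 'X * (N i j)%:P))) => t.
rewrite -horner_evalE -det_map_mx; congr determinant; apply/matrixP => i j.
by rewrite !mxE /= horner_evalE hornerD hornerM !hornerC hornerX.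
Qed.

End Determinants.

Section QuadraticForm.
Variable R : realType.

Lemma qformD n (M N : 'M[R]_n) u : qform (M + N) u = qform M u + qform N u.
Proof. by rewrite /qform mulmxDr mulmxDl !mxE. Qed.

Lemma qformB n (M N : 'M[R]_n) u : qform (M - N) u = qform M u - qform N u.
Proof. by rewrite /qform mulmxBr mulmxBl !mxE. Qed.

Lemma qformZ n (c : R) (M : 'M[R]_n) u : qform (c *: M) u = c * qform M u.
Proof. by rewrite /qform -scalemxAr -scalemxAl mxE. Qed.

Lemma qform1_ge0 n (u : 'cV[R]_n) : 0 <= qform 1%:M u.
Proof.
rewrite /qform mulmx1 mxE; apply: sumr_ge0 => i _.
by rewrite mxE -expr2 sqr_ge0.
Qed.

Lemma qform_symB n (M : 'M[R]_n) u v : symmat M ->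
  qform M (u - v) = qform M u - 2 * (u^T *m M *m v) 0 0 + qform M v.
Proof.
move=> sM; have vMu : v^T *m M *m u = u^T *m M *m v.
  have tr11 (N : 'M[R]_1) : N^T = N by rewrite [N]mx11_scalar tr_scalar_mx.
  by rewrite -[LHS]tr11 !trmx_mul trmxK sM mulmxA.
rewrite /qform mulmxBr [(u - v)^T]linearB /= !mulmxBl vMu !mxE.
ring.
Qed.

Lemma qform_gt0_det_neq0 n (M : 'M[R]_n) :
  (forall v, v != 0 -> 0 < qform M v) -> \det M != 0.
Proof.
move=> pM; apply/negP => /det0P [v v0 vM].
have vT0 : v^T != 0 by rewrite -(inj_eq (@trmx_inj _ _ _)) trmxK trmx0.
by have := pM _ vT0; rewrite /qform trmxK vM mul0mx mxE ltxx.
Qed.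

(* Along the segment from M to 1 the form stays positive, so the determinant,
   a polynomial in the parameter, never vanishes and keeps the sign of det 1. *)
Lemma qform_gt0_det_gt0 n (M : 'M[R]_n) :
  (forall v, v != 0 -> 0 < qform M v) -> 0 < \det M.
Proof.
move=> pM; have [p pE] := det_addZ_poly M (1%:M - M).
have pt_neq0 t : 0 <= t <= 1 -> p.[t] != 0.
  move=> /andP[t0 t1]; rewrite pE.
  have [->|t_neq1] := eqVneq t 1; first by rewrite scale1r addrC subrK det1 oner_neq0.
  apply: qform_gt0_det_neq0 => v v0; rewrite qformD qformZ qformB.
  have t_lt1 : t < 1 by rewrite lt_neqAle t_neq1.
  have := pM v v0; have := qform1_ge0 v; nra.
rewrite ltNge; apply/negP => detM_le0.
have [|t /andP[t0 t1]] := @poly_ivt R p 0 1 ler01.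
  by rewrite !pE scale0r addr0 detM_le0 scale1r addrC subrK det1 ler01.
by rewrite /root (negbTE (pt_neq0 t _)) // t0 t1.
Qed.

Lemma VpotB n (A G S : 'M[R]_n) : 0 < \det A -> 0 < \det G -> 0 < \det S ->
  Vpot A G - Vpot A S = ln (\det G / \det S).
Proof.
move=> dA dG dS; have dAV : 0 < (\det A)^-1 by rewrite invr_gt0.
have uA : A \in unitmx by rewrite unitmxE unitfE gt_eqF.
rewrite /Vpot !det_mulmx det_inv !lnM ?posrE ?mulr_gt0 ?invr_gt0 // lnV ?posrE //.
ring.
Qed.

End QuadraticForm.

Section SR1Update.
Variables (R : realType) (n : nat) (A G : 'M[R]_n) (u : 'cV[R]_n).
Hypotheses (sG : symmat G) (pA : posdef A) (pD : psd (G - A)).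

Let D := G - A.
Let w := D *m u.
Let x := invmx G *m w.
Let a := qform (D *m invmx G *m D) u.
Let b := qform D u.

Lemma qformG_gt0 v : v != 0 -> 0 < qform G v.
Proof.
move=> v0; rewrite -(subrK A G) qformD.
by apply: ltr_wpDl; [exact: pD.2 | exact: pA.2].
Qed.

Let uG : G \in unitmx.
Proof. by rewrite unitmxE unitfE gt_eqF // qform_gt0_det_gt0 // => v /qformG_gt0. Qed.

Let Gx : G *m x = w.
Proof. by rewrite /x mulmxA mulmxV // mul1mx. Qed.

Let a_qformG : a = qform G x.
Proof.
have DT : D^T = D := pD.1.
rewrite /a /qform -(mulmxA x^T) Gx /x /w trmx_mul trmx_inv sG trmx_mul DT.
by rewrite !mulmxA.
Qed.

Let uDx : (u^T *m D *m x) 0 0 = a.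
Proof. by rewrite /a /qform /x /w !mulmxA. Qed.

Lemma qform_schur : qform (A - A *m invmx G *m A) u = b - a.
Proof.
have -> : A - A *m invmx G *m A = D - D *m invmx G *m D.
  rewrite /D !mulmxBl !mulmxBr mulmxV // mul1mx -!mulmxA mulVmx // mulmx1.
  by rewrite mul1mx opprB [RHS]addrC subrK.
by rewrite qformB.
Qed.

Hypothesis w_neq0 : w != 0.

Lemma qform_DinvGD_bounds : 0 < a < b.
Proof.
have x0 : x != 0 by apply: contra w_neq0 => /eqP x0; rewrite -Gx x0 mulmx0.
have qAx := pA.2 x x0; have qDx := pD.2 x; have := pD.2 (u - x).
have aE : a = qform A x + qform D x by rewrite a_qformG -(subrK A G) qformD addrC.
rewrite qform_symB ?uDx; last exact: pD.1.
rewrite -/D -/b in qDx * => qDux; apply/andP; split; lra.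
Qed.

Lemma nu_sqr : nu A G u ^+ 2 = a / (b - a).
Proof.
have /andP[a0 ab] := qform_DinvGD_bounds.
by rewrite /nu (negbTE w_neq0) qform_schur sqr_sqrtr // divr_ge0 // ltW ?subr_gt0.
Qed.

Lemma det_SR1 : \det (SR1 A G u) = \det G * ((b - a) / b).
Proof.
have /andP[a0 ab] := qform_DinvGD_bounds; have b0 : b != 0 by rewrite gt_eqF ?(lt_trans a0).
have wT : w^T = u^T *m D by rewrite /w trmx_mul pD.1.
have -> : SR1 A G u = G *m (1%:M - (b^-1 *: x) *m w^T).
  rewrite /SR1 (negbTE w_neq0) -/D -/b [RHS]mulmxBr mulmx1 mulmxA -scalemxAr Gx.
  by rewrite -scalemxAl wT !mulmxA.
rewrite det_mulmx det_1B_rank1 -scalemxAr mxE wT uDx.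
by congr (_ * _); field.
Qed.

Lemma VpotB_SR1 : Vpot A G - Vpot A (SR1 A G u) = ln (1 + nu A G u ^+ 2).
Proof.
have /andP[a0 ab] := qform_DinvGD_bounds; have b0 := lt_trans a0 ab.
have dG : 0 < \det G := qform_gt0_det_gt0 qformG_gt0.
have dS : 0 < \det (SR1 A G u) by rewrite det_SR1 mulr_gt0 ?divr_gt0 ?subr_gt0.
rewrite nu_sqr VpotB ?(qform_gt0_det_gt0 pA.2) // det_SR1.
by congr ln; field; rewrite !gt_eqF ?subr_gt0.
Qed.

End SR1Update.

Theorem lemma4 (R : realType) (n : nat) (A G : 'M[R]_n) (u : 'cV[R]_n) :
  symmat A -> symmat G -> posdef A -> psd (G - A) -> u != 0 ->
  Vpot A G - Vpot A (SR1 A G u) = ln (1 + nu A G u ^+ 2).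
Proof.
(* [symmat A] is part of [posdef A]. *)
move=> _ sG pA pD _.
have [w0|w_neq0] := eqVneq ((G - A) *m u) 0; last exact: VpotB_SR1.
by rewrite /SR1 /nu w0 eqxx subrr expr0n addr0 ln1.
Qed.
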